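(* Let $n=2m+1$ be odd and let $\mathbf{X}=\{X_{rj}:r,j=1,\dots,n\}$ be the switch variables of the standard lightbulb process. Given $\mathbf{X}$, let $B_m$ be uniform on $\{j:X_{mj}=0\}$ and $B_{m+1}$ uniform on $\{j:X_{m+1,j}=1\}$, and let $C_m,C_{m+1}$ be symmetric Bernoulli ($P(C=0)=P(C=1)=1/2$) variables independent of each other, of $\mathbf{X}$ and of $B_m,B_{m+1}$. Define $\mathbf{V}=\{V_{rj}\}$ by $V_{rj}=X_{rj}$ for $r\notin\{m,m+1\}$; $V_{mj}=X_{mj}$ for $j\ne B_m$, $V_{m,B_m}=C_m$; $V_{m+1,j}=X_{m+1,j}$ for $j\ne B_{m+1}$, $V_{m+1,B_{m+1}}=C_{m+1}$. Let $V_j=(\sum_{r=1}^nV_{rj})\bmod 2$ and $V=\sum_{j=1}^nV_j$. Then: the row vectors $(V_{r1},\dots,V_{rn})$, $r=1,\dots,n$, are mutually independent; for $r\in\{m,m+1\}$, $$\mathcal{L}(V_{r1},\dots,V_{rn})=\tfrac12\mathcal{L}(X_{m1},\dots,X_{mn})+\tfrac12\mathcal{L}(X_{m+1,1},\dots,X_{m+1,n});$$ $P(V_j=1)=1/2$ for all $j$; $EV=n/2$; and $\mathrm{Var}(V)=\sigma_V^2:=\frac n4(1-\overline{\lambda}_{n,2,\mathbf{n}})+\frac{n^2}{4}\overline{\lambda}_{n,2,\mathbf{n}}$.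
   Context: Standard lightbulb process: $n$ bulbs, all initially off, $n$ stages; at stage $r=1,\dots,n$ a uniformly random subset of exactly $r$ bulbs is toggled, independently across stages; $X_{rj}\in\{0,1\}$ is $1$ iff bulb $j$ is toggled at stage $r$. With $(n)_t=n(n-1)\cdots(n-t+1)$, define $\lambda_{n,b,s}=\sum_{t=0}^b\binom bt(-2)^t\frac{(s)_t}{(n)_t}$. For $n=2m+1$, $\overline{\lambda}_{n,2,\mathbf{n}}=\Big(\prod_{s\in\{1,\dots,n\}\setminus\{m,m+1\}}\lambda_{n,2,s}\Big)\Big(\tfrac12(\lambda_{n,2,m}+\lambda_{n,2,m+1})\Big)^2$. $\mathcal{L}$ denotes law; a combination $\frac12\mathcal{L}_1+\frac12\mathcal{L}_2$ is the equal mixture. *)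

From HB Require Import structures.
From mathcomp Require Import all_boot all_order all_algebra.
Set Implicit Arguments. Unset Strict Implicit. Unset Printing Implicit Defensive.
Import Order.TTheory GRing.Theory Num.Theory.
Local Open Scope ring_scope.

Definition lam {R : realFieldType} (n b s : nat) : R :=
  \sum_(t < b.+1) ('C(b, t))%:R * (-2) ^+ t * (s ^_ t)%:R / (n ^_ t)%:R.

Section Lightbulb.
Variables (R : realFieldType) (m : nat).

Definition nb : nat := m.*2.+1.

Definition lambar : R :=
  (\prod_(1 <= s < nb.+1 | (s != m) && (s != m.+1)) lam nb 2 s) *
  (2^-1 * (lam nb 2 m + lam nb 2 m.+1)) ^+ 2.

(* Stages r = 1..n are indexed by ordinals i : 'I_n with r = i + 1;
   bulbs j = 1..n are indexed by 'I_n. *)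
Definition stage (r : nat) : 'I_nb := inord r.-1.

Definition Row := {ffun 'I_nb -> bool}.
Definition Mat := {ffun 'I_nb -> Row}.

Definition Omega := (Mat * 'I_nb * 'I_nb * bool * bool)%type.

Definition Xof (w : Omega) : Mat := w.1.1.1.1.
Definition Bm (w : Omega) : 'I_nb := w.1.1.1.2.
Definition Bm1 (w : Omega) : 'I_nb := w.1.1.2.
Definition Cm (w : Omega) : bool := w.1.2.
Definition Cm1 (w : Omega) : bool := w.2.

Definition unif_row (k : nat) (x : Row) : R :=
  if #|[set j | x j]| == k then ('C(nb, k))%:R^-1 else 0.

Definition unif_on (A : {set 'I_nb}) (b : 'I_nb) : R :=
  if b \in A then (#|A|%:R)^-1 else 0.

(* joint probability weight of a sample point:
   independent stages (stage i+1 toggles a uniform (i+1)-subset),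
   B_m uniform on {j : X_{mj} = 0}, B_{m+1} uniform on {j : X_{m+1,j} = 1}
   given X, and C_m, C_{m+1} independent fair bits *)
Definition weight (w : Omega) : R :=
  (\prod_(i < nb) unif_row i.+1 (Xof w i)) *
  unif_on [set j | ~~ Xof w (stage m) j] (Bm w) *
  unif_on [set j | Xof w (stage m.+1) j] (Bm1 w) *
  2^-1 * 2^-1.

Definition prob (E : pred Omega) : R := \sum_(w : Omega | E w) weight w.
Definition expect (f : Omega -> R) : R := \sum_(w : Omega) weight w * f w.
Definition var (f : Omega -> R) : R := expect (fun w => (f w - expect f) ^+ 2).

Definition Vrow (w : Omega) (i : 'I_nb) : Row :=
  [ffun j =>
    if i == stage m then (if j == Bm w then Cm w else Xof w i j)
    else if i == stage m.+1 then (if j == Bm1 w then Cm1 w else Xof w i j)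
    else Xof w i j].

Definition Vj (w : Omega) (j : 'I_nb) : nat := (\sum_(i < nb) Vrow w i j) %% 2.
Definition Vtot (w : Omega) : nat := \sum_(j < nb) Vj w j.

End Lightbulb.

Arguments prob R {m} E.
Arguments expect R {m} f.
Arguments var R {m} f.

From HB Require Import structures.
From mathcomp Require Import all_boot all_order all_algebra.
From mathcomp Require Import fingroup perm.
From mathcomp Require Import ring zify.
Import Order.TTheory GRing.Theory Num.Theory.
Local Open Scope ring_scope.
Set Implicit Arguments. Unset Strict Implicit.

(* Each row of V is a function of the same row of X and of auxiliary variables
   independent of everything else, so the rows of V are independent.  Row m of X
   is a uniform m-subset of the n = 2m+1 bulbs; overwriting a uniformly chosen
   zero by a fair bit keeps it with probability 1/2 and otherwise produces a
   uniform (m+1)-subset, since every (m+1)-subset arises from exactly m+1 pairs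
   (m-subset, zero) and C(n,m) = C(n,m+1); row m+1 is symmetric.
   With s_j = (-1)^(V_1j + ... + V_nj) we have V_j = (1 - s_j)/2, and by
   independence E s_j and E s_j s_k (j <> k) are products over the rows.  For a
   uniform s-subset row, E (-1)^x_j = lam n 1 s and E (-1)^(x_j + x_k) = lam n 2 s;
   the two mixed rows contribute (lam n 1 m + lam n 1 (m+1))/2 = 0 and
   (lam n 2 m + lam n 2 (m+1))/2.  Hence E s_j = 0 and E s_j s_k = lambar, which
   gives the mean and variance of V = n/2 - (s_1 + ... + s_n)/2. *)

Section LightbulbV.
Variables (R : realFieldType) (m : nat).
Hypothesis m_gt0 : (0 < m)%N.
Local Notation n := (nb m).
Local Notation sm := (stage m m).
Local Notation sm1 := (stage m m.+1).

Lemma stageK r : (0 < r <= n)%N -> (stage m r).+1 = r.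
Proof. by case: r => [|r] //= r_le; rewrite inordK. Qed.

Lemma eq_stage (i : 'I_n) r : (0 < r <= n)%N -> (i == stage m r) = (i.+1 == r)%N.
Proof. by move=> hr; rewrite -[in RHS](stageK hr) eqSS. Qed.

Lemma stage_mE : (sm : nat).+1 = m.
Proof. by apply: stageK; rewrite /nb; lia. Qed.

Lemma stage_m1E : (sm1 : nat).+1 = m.+1.
Proof. by apply: stageK; rewrite /nb; lia. Qed.

Lemma stage_m1_neq : sm1 != sm.
Proof. by apply/negP => /eqP/(congr1 (fun i : 'I_n => i.+1)); rewrite stage_mE stage_m1E; lia. Qed.

Lemma prod_stages (F : 'I_n -> R) :
  \prod_(i < n) F i = F sm * (F sm1 * \prod_(i < n | (i != sm) && (i != sm1)) F i).
Proof. by rewrite (bigD1 sm) // (bigD1 sm1) ?stage_m1_neq. Qed.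

(** * Rows and bit flips *)

Definition upd (x : Row m) (b : 'I_n) (c : bool) : Row m :=
  [ffun j => if j == b then c else x j].

Lemma upd_id (x : Row m) b c : x b = c -> upd x b c = x.
Proof. by move=> xb; apply/ffunP => j; rewrite ffunE; case: eqP => // ->. Qed.

Lemma upd_upd (x : Row m) b c c' : upd (upd x b c) b c' = upd x b c'.
Proof. by apply/ffunP => j; rewrite !ffunE; case: eqP. Qed.

Definition bitset (c : bool) (x : Row m) : {set 'I_n} := [set j | x j == c].

Lemma bitsetF (x : Row m) : bitset false x = [set j | ~~ x j].
Proof. by apply/setP => j; rewrite !inE eqbF_neg. Qed.

Lemma bitsetT (x : Row m) : bitset true x = [set j | x j].
Proof. by apply/setP => j; rewrite !inE eqb_id. Qed.

Definition nbits (c : bool) (k : nat) : nat := if c then k else (n - k)%N.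

Definition flipk (c : bool) (k : nat) : nat := if c then k.-1 else k.+1.

Lemma card_bitset c (x : Row m) : #|bitset c x| = nbits c #|bitset true x|.
Proof.
case: c => //; have <- : ~: bitset true x = bitset false x.
  by apply/setP => j; rewrite !inE; case: (x j).
by rewrite cardsCs card_ord setCK.
Qed.

Lemma card_bitset_upd c (x : Row m) b : x b = c ->
  #|bitset true (upd x b (~~ c))| = flipk c #|bitset true x|.
Proof.
case: c => xb /=.
  have -> : bitset true x = b |: bitset true (upd x b false).
    by apply/setP => j; rewrite !inE ffunE; case: (eqVneq j b) => // ->; rewrite xb.
  by rewrite cardsU1 !inE ffunE eqxx.
have -> : bitset true (upd x b true) = b |: bitset true x.
  by apply/setP => j; rewrite !inE ffunE; case: (eqVneq j b).
by rewrite cardsU1 inE xb.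
Qed.

Lemma bin_nbits c k : (0 < nbits c k)%N ->
  ('C(n, k) * nbits c k = 'C(n, flipk c k) * nbits (~~ c) (flipk c k))%N.
Proof.
case: c => /=; last by rewrite [RHS]mulnC mul_bin_left mulnC.
by case: k => // k _; rewrite mulnC mul_bin_left mulnC.
Qed.

Lemma sum_upd_flip (F : Row m -> R) b c :
  \sum_(x : Row m | x b == c) F (upd x b (~~ c)) = \sum_(v : Row m | v b == ~~ c) F v.
Proof.
rewrite [RHS](reindex_onto (fun x => upd x b (~~ c)) (fun v => upd v b c)) /=; last first.
  by move=> v /eqP vb; rewrite upd_upd upd_id.
apply: eq_bigl => x; rewrite upd_upd /upd ffunE !eqxx /=.
by apply/eqP/eqP => [xb | <-]; [exact: upd_id | rewrite ffunE eqxx].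
Qed.

Definition permr (p : {perm 'I_n}) (x : Row m) : Row m := [ffun j => x (p j)].

Lemma sum_bits (x : Row m) : (\sum_(j < n) x j)%N = #|bitset true x|.
Proof.
rewrite -sum1_card [RHS]big_mkcond /=; apply: eq_bigr => j _.
by rewrite inE eqb_id; case: (x j).
Qed.

(** * Uniform rows *)

Lemma sum_unif_on (A : {set 'I_n}) : A != set0 -> \sum_b unif_on R A b = 1.
Proof.
move=> A_neq0; rewrite /unif_on -big_mkcond /= sumr_const -[LHS]mulr_natr mulVf //.
by rewrite pnatr_eq0 -lt0n card_gt0.
Qed.

Lemma unif_rowE k (x : Row m) :
  unif_row R k x = if #|bitset true x| == k then ('C(n, k))%:R^-1 else 0.
Proof. by rewrite /unif_row bitsetT. Qed.

Lemma sum_unif_row k : (k <= n)%N -> \sum_(x : Row m) unif_row R k x = 1.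
Proof.
move=> k_le; pose ind (A : {set 'I_n}) : Row m := [ffun j => j \in A].
have indK : cancel ind (bitset true) by move=> A; apply/setP => j; rewrite !inE ffunE.
have bitsetK : cancel (bitset true) ind by move=> x; apply/ffunP => j; rewrite ffunE inE eqb_id.
rewrite (reindex ind) /=; last by exists (bitset true) => ? _; [apply: indK | apply: bitsetK].
under eq_bigr do rewrite unif_rowE indK.
rewrite -big_mkcond /= sumr_const -[LHS]mulr_natr.
have -> : #|[pred A : {set 'I_n} | #|A| == k]| = 'C(n, k).
  by rewrite -[in RHS](card_ord n) -card_draws; apply: eq_card => A; rewrite !inE.
by rewrite mulVf // pnatr_eq0 -lt0n bin_gt0.
Qed.

Lemma unif_row_perm k p (x : Row m) : unif_row R k (permr p x) = unif_row R k x.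
Proof.
rewrite !unif_rowE; have -> : bitset true (permr p x) = p @^-1: bitset true x.
  by apply/setP => j; rewrite !inE ffunE.
by rewrite card_preimset //; exact: perm_inj.
Qed.

Lemma sum_unif_row_perm k p (F : Row m -> R) :
  \sum_(x : Row m) unif_row R k x * F x = \sum_(x : Row m) unif_row R k x * F (permr p x).
Proof.
rewrite (reindex (permr p)) /=; last first.
  by exists (permr p^-1) => x _; apply/ffunP => j; rewrite !ffunE ?permKV ?permK.
by apply: eq_bigr => x _; rewrite unif_row_perm.
Qed.

Lemma unif_row_mean k j : (k <= n)%N ->
  \sum_(x : Row m) unif_row R k x * (x j)%:R = k%:R / n%:R.
Proof.
move=> k_le; pose a j' := \sum_(x : Row m) unif_row R k x * (x j')%:R.
have a_sym j' : a j' = a j.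
  by rewrite /a (sum_unif_row_perm k (tperm j' j)); apply: eq_bigr => x _; rewrite ffunE tpermL.
have sum_a : \sum_(j' < n) a j' = k%:R.
  rewrite /a exchange_big /=.
  transitivity (\sum_(x : Row m) unif_row R k x * k%:R).
    apply: eq_bigr => x _; rewrite -mulr_sumr -natr_sum sum_bits unif_rowE.
    by case: eqP => [-> | _]; rewrite ?mul0r.
  by rewrite -big_distrl /= sum_unif_row // mul1r.
move: sum_a; rewrite (eq_bigr _ (fun j' _ => a_sym j')) sumr_const card_ord => <-.
by rewrite -[a j *+ n]mulr_natr mulfK // pnatr_eq0.
Qed.

Lemma unif_row_pair k j j' : (k <= n)%N -> j != j' ->
  \sum_(x : Row m) unif_row R k x * ((x j)%:R * (x j')%:R) = (k ^_ 2)%:R / (n ^_ 2)%:R.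
Proof.
move=> k_le jj'; pose b j2 := \sum_(x : Row m) unif_row R k x * ((x j)%:R * (x j2)%:R).
have b_sym j2 : j2 != j -> b j2 = b j'.
  move=> j2j; rewrite /b (sum_unif_row_perm k (tperm j2 j')); apply: eq_bigr => x _.
  by rewrite !ffunE tpermL tpermD // eq_sym.
have sum_b : \sum_(j2 < n | j2 != j) b j2 = k.-1%:R * (k%:R / n%:R).
  rewrite -(unif_row_mean j k_le) mulr_sumr /b exchange_big /=; apply: eq_bigr => x _.
  rewrite -mulr_sumr unif_rowE; case: eqP => [x_k | _]; last by rewrite !mul0r mulr0.
  rewrite mulrCA; congr (_ * _); rewrite -mulr_sumr -natr_sum.
  move: (sum_bits x); rewrite x_k (bigD1 j) //=; case: (x j) => /= [<- | _].
    by rewrite mul1r mulr1 add1n.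
  by rewrite mul0r mulr0.
have n1_gt0 : (0 < n.-1)%N by rewrite /nb; lia.
move: sum_b; rewrite (eq_bigr _ b_sym) sumr_const.
rewrite -[_ *+ _]mulr_natr => b_eq; rewrite cardC1 card_ord in b_eq; rewrite -/(b j').
have n1_neq0 : (n.-1)%:R != 0 :> R by rewrite pnatr_eq0 -lt0n.
have n_neq0 : n%:R != 0 :> R by rewrite pnatr_eq0.
apply: (mulIf n1_neq0); rewrite b_eq !ffactnS !ffactn0 !muln1 !natrM.
by field; rewrite n_neq0 n1_neq0.
Qed.

Lemma sign_bit (c : bool) : (-1) ^+ c = 1 - 2 * c%:R :> R.
Proof. by case: c; rewrite /= ?expr0 ?expr1; ring. Qed.

Lemma unif_row_sign k j : (k <= n)%N ->
  \sum_(x : Row m) unif_row R k x * (-1) ^+ x j = lam n 1 k.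
Proof.
move=> k_le; under eq_bigr do rewrite sign_bit mulrBr mulr1 mulrCA.
rewrite sumrB -mulr_sumr sum_unif_row // unif_row_mean //.
by rewrite /lam !big_ord_recr big_ord0 /= !ffactn0 !ffactn1 ?bin0 ?binn ?bin1 invr1; ring.
Qed.

Lemma unif_row_sign_pair k j j' : (k <= n)%N -> j != j' ->
  \sum_(x : Row m) unif_row R k x * ((-1) ^+ x j * (-1) ^+ x j') = lam n 2 k.
Proof.
move=> k_le jj'; under eq_bigr => x _ do rewrite !sign_bit.
rewrite (eq_bigr (fun x => unif_row R k x - 2 * (unif_row R k x * (x j)%:R) -
  2 * (unif_row R k x * (x j')%:R) + 4 * (unif_row R k x * ((x j)%:R * (x j')%:R)))); last first.
  by move=> x _; ring.
rewrite big_split /= !sumrB -!mulr_sumr sum_unif_row // !unif_row_mean // unif_row_pair //.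
by rewrite /lam !big_ord_recr big_ord0 /= !ffactn0 !ffactn1 ?bin0 ?binn ?bin1 invr1; ring.
Qed.

(** * Resampling one bit of a uniform row *)

Lemma halfD : 2^-1 + 2^-1 = 1 :> R.
Proof. by rewrite [RHS](splitr 1) mul1r. Qed.

Definition resample (A : {set 'I_n}) (x : Row m) (h : Row m -> R) : R :=
  \sum_b \sum_c unif_on R A b / 2 * h (upd x b c).

Lemma resampleE c A (x : Row m) (h : Row m -> R) :
  resample A x h = 2^-1 * \sum_b unif_on R A b * h (upd x b c) +
                   2^-1 * \sum_b unif_on R A b * h (upd x b (~~ c)).
Proof.
rewrite /resample !mulr_sumr -big_split; apply: eq_bigr => b _.
by rewrite big_bool; case: c => /=; ring.
Qed.

Lemma resample_keep c (x : Row m) (h : Row m -> R) : bitset c x != set0 ->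
  \sum_b unif_on R (bitset c x) b * h (upd x b c) = h x.
Proof.
move=> c_bits; rewrite -[RHS]mul1r -(sum_unif_on c_bits) big_distrl /=.
apply: eq_bigr => b _; rewrite /unif_on; case: ifP => [|_]; last by rewrite !mul0r.
by rewrite inE => /eqP/upd_id ->.
Qed.

Lemma resample_cst A (x : Row m) (a : R) : A != set0 -> resample A x (fun=> a) = a.
Proof.
move=> A_neq0; rewrite (resampleE true) -!big_distrl /= sum_unif_on //.
by rewrite mul1r -mulrDl halfD mul1r.
Qed.

(* Each row with [flipk c k] ones arises from [nbits (~~ c) (flipk c k)] pairs
   [(x, b)], and [bin_nbits] balances the weights. *)
Lemma unif_row_flip c k (h : Row m -> R) : (k <= n)%N -> (0 < nbits c k)%N ->
  \sum_(x : Row m) unif_row R k x * \sum_b unif_on R (bitset c x) b * h (upd x b (~~ c)) =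
  \sum_(x : Row m) unif_row R (flipk c k) x * h x.
Proof.
move=> k_le nbits_gt0.
have card_flip (x : Row m) b : x b = c ->
    (#|bitset true x| == k) = (#|bitset true (upd x b (~~ c))| == flipk c k).
  move=> xb; rewrite card_bitset_upd //; case: c xb nbits_gt0 => xb /= k_gt0; last by rewrite eqSS.
  have x_gt0 : (0 < #|bitset true x|)%N by apply/card_gt0P; exists b; rewrite inE xb.
  by rewrite -{1}(prednK x_gt0) -{1}(prednK k_gt0) eqSS.
set k' := flipk c k; pose K : R := ('C(n, k) * nbits c k)%:R^-1.
transitivity (\sum_b \sum_(x : Row m | x b == c)
    (#|bitset true (upd x b (~~ c))| == k')%:R * K * h (upd x b (~~ c))).
  under eq_bigr do rewrite big_distrr /=.
  rewrite exchange_big /=; apply: eq_bigr => b _; rewrite [RHS]big_mkcond /=.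
  apply: eq_bigr => x _; rewrite unif_rowE /unif_on inE.
  case: (eqVneq (x b) c) => [xb | _]; last by rewrite !mul0r mulr0.
  rewrite -card_flip //; case: eqP => [x_k | _]; last by rewrite !mul0r.
  by rewrite card_bitset x_k /K natrM invfM /= mul1r mulrA.
under eq_bigr do rewrite (sum_upd_flip (fun v => (#|bitset true v| == k')%:R * K * h v)).
under eq_bigr do rewrite big_mkcond /=.
rewrite exchange_big /=; apply: eq_bigr => v _.
rewrite -big_mkcond sumr_const unif_rowE; case: eqP => [v_k' | _]; last by rewrite !mul0r mul0rn.
have -> : #|[pred b | v b == ~~ c]| = nbits (~~ c) k'.
  by rewrite -v_k' -card_bitset; apply: eq_card => b; rewrite !inE.
have nbits'_gt0 : (0 < nbits (~~ c) k')%N.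
  have : (0 < 'C(n, k) * nbits c k)%N by rewrite muln_gt0 bin_gt0 k_le.
  by rewrite bin_nbits // muln_gt0 => /andP[].
by rewrite /K bin_nbits // natrM invfM /= -[_ *+ _]mulr_natr mul1r mulrAC divfK // pnatr_eq0 -lt0n.
Qed.

Lemma unif_row_resample c k (h : Row m -> R) : (k <= n)%N -> (0 < nbits c k)%N ->
  \sum_(x : Row m) unif_row R k x * resample (bitset c x) x h =
  2^-1 * \sum_(x : Row m) unif_row R k x * h x +
  2^-1 * \sum_(x : Row m) unif_row R (flipk c k) x * h x.
Proof.
move=> k_le nbits_gt0; rewrite -unif_row_flip // !mulr_sumr -big_split /=.
apply: eq_bigr => x _; rewrite (resampleE c) mulrDr !(mulrCA (unif_row R k x)); congr (_ * _ + _).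
rewrite unif_rowE; case: eqP => [x_k | _]; last by rewrite !mul0r.
by rewrite resample_keep // -card_gt0 card_bitset x_k.
Qed.

(** * The law of the rows of V *)

(* [Vkernel i x h] is the conditional expectation of [h] of row [i] of V given
   that row [i] of X is [x]. *)
Definition Vkernel (i : 'I_n) (x : Row m) (h : Row m -> R) : R :=
  if i == sm then resample (bitset false x) x h
  else if i == sm1 then resample (bitset true x) x h
  else h x.

Definition Vlaw (i : 'I_n) (x : Row m) : R :=
  if (i == sm) || (i == sm1) then 2^-1 * unif_row R m x + 2^-1 * unif_row R m.+1 x
  else unif_row R i.+1 x.

Lemma sum_Vlaw_stage (i : 'I_n) (h : Row m -> R) : (i == sm) || (i == sm1) ->
  \sum_(x : Row m) Vlaw i x * h x =
  2^-1 * \sum_(x : Row m) unif_row R m x * h x + 2^-1 * \sum_(x : Row m) unif_row R m.+1 x * h x.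
Proof.
move=> i_stage; rewrite !mulr_sumr -big_split; apply: eq_bigr => x _.
by rewrite /Vlaw i_stage mulrDl !mulrA.
Qed.

Lemma sum_Vlaw i : \sum_(x : Row m) Vlaw i x = 1.
Proof.
have m1_le : (m.+1 <= n)%N by rewrite /nb; lia.
case: (boolP ((i == sm) || (i == sm1))) => [i_stage | i_other].
  under eq_bigr do rewrite /Vlaw i_stage.
  by rewrite big_split /= -!mulr_sumr !sum_unif_row ?(ltnW m1_le) // !mulr1 halfD.
by under eq_bigr do rewrite /Vlaw (negbTE i_other); rewrite sum_unif_row.
Qed.

Lemma Vkernel_law (i : 'I_n) (h : Row m -> R) :
  \sum_(x : Row m) unif_row R i.+1 x * Vkernel i x h = \sum_(x : Row m) Vlaw i x * h x.
Proof.
have m_le : (m < n)%N by rewrite /nb; lia.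
rewrite /Vkernel; case: (eqVneq i sm) => [-> | i_sm].
  by rewrite sum_Vlaw_stage ?eqxx // stage_mE unif_row_resample ?subn_gt0 // ltnW.
case: (eqVneq i sm1) => [-> | i_sm1].
  by rewrite sum_Vlaw_stage ?eqxx ?orbT // stage_m1E unif_row_resample // addrC.
by apply: eq_bigr => x _; rewrite /Vlaw (negbTE i_sm) (negbTE i_sm1).
Qed.

Lemma Vkernel_cst (i : 'I_n) (x : Row m) (a : R) :
  #|bitset true x| = i.+1 -> Vkernel i x (fun=> a) = a.
Proof.
move=> x_ones; rewrite /Vkernel; case: ifP => [/eqP i_sm | _].
  by rewrite resample_cst // -card_gt0 card_bitset x_ones i_sm stage_mE /nbits /nb; lia.
by case: ifP => // _; rewrite resample_cst // -card_gt0 x_ones.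
Qed.

Lemma Vrow_sm (w : Omega m) : Vrow w sm = upd (Xof w sm) (Bm w) (Cm w).
Proof. by apply/ffunP => j; rewrite !ffunE eqxx. Qed.

Lemma Vrow_sm1 (w : Omega m) : Vrow w sm1 = upd (Xof w sm1) (Bm1 w) (Cm1 w).
Proof. by apply/ffunP => j; rewrite !ffunE eqxx (negbTE stage_m1_neq). Qed.

Lemma Vrow_id (w : Omega m) i : i != sm -> i != sm1 -> Vrow w i = Xof w i.
Proof. by move=> /negbTE i_sm /negbTE i_sm1; apply/ffunP => j; rewrite !ffunE i_sm i_sm1. Qed.

Lemma sum_pair (A B : finType) (F : A * B -> R) :
  \sum_(p : A * B) F p = \sum_a \sum_b F (a, b).
Proof. by rewrite pair_big; apply: eq_bigr => -[]. Qed.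

Lemma expect_prod_rows (g : 'I_n -> Row m -> Row m -> R) :
  expect R (fun w : Omega m => \prod_(i < n) g i (Xof w i) (Vrow w i)) =
  \prod_(i < n) \sum_(x : Row m) unif_row R i.+1 x * Vkernel i x (g i x).
Proof.
rewrite bigA_distr_bigA /expect !sum_pair; apply: eq_bigr => X _ /=.
have rest_Vrow (w : Omega m) : Xof w = X ->
    \prod_(i < n | (i != sm) && (i != sm1)) g i (Xof w i) (Vrow w i) =
    \prod_(i < n | (i != sm) && (i != sm1)) g i (X i) (X i).
  by move=> <-; apply: eq_bigr => i /andP[i_sm i_sm1]; rewrite Vrow_id.
have rest_kernel :
    \prod_(i < n | (i != sm) && (i != sm1)) Vkernel i (X i) (g i (X i)) =
    \prod_(i < n | (i != sm) && (i != sm1)) g i (X i) (X i).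
  by apply: eq_bigr => i /andP[/negbTE i_sm /negbTE i_sm1]; rewrite /Vkernel i_sm i_sm1.
rewrite big_split /= [X in _ * X]prod_stages rest_kernel /Vkernel eqxx (negbTE stage_m1_neq) eqxx.
under eq_bigr do under eq_bigr do under eq_bigr do under eq_bigr do
  rewrite prod_stages Vrow_sm Vrow_sm1 rest_Vrow //.
rewrite /resample /weight /Xof /Bm /Bm1 /Cm /Cm1 /=.
set P := \prod_(i < n) _.
set rest := \prod_(i < n | _) _.
rewrite big_distrl big_distrr /=; apply: eq_bigr => b _.
rewrite exchange_big /=.
rewrite big_distrl big_distrr /=; apply: eq_bigr => c _.
rewrite big_distrl !big_distrr /=; apply: eq_bigr => b' _.
rewrite big_distrl !big_distrr /=; apply: eq_bigr => c' _.
by rewrite bitsetF bitsetT; ring.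
Qed.

Lemma prod_if_eq (I : finType) (F : I -> R) i : \prod_k (if k == i then F k else 1) = F i.
Proof. by rewrite -big_mkcond big_pred1_eq. Qed.

Lemma expect_prod_Vrow (f : 'I_n -> Row m -> R) :
  expect R (fun w : Omega m => \prod_(i < n) f i (Vrow w i)) =
  \prod_(i < n) \sum_(x : Row m) Vlaw i x * f i x.
Proof.
by rewrite (expect_prod_rows (fun i _ => f i)); apply: eq_bigr => i _; exact: Vkernel_law.
Qed.

Lemma expect_Vrow (i : 'I_n) (f : Row m -> R) :
  expect R (fun w : Omega m => f (Vrow w i)) = \sum_(x : Row m) Vlaw i x * f x.
Proof.
have := expect_prod_Vrow (fun k x => if k == i then f x else 1).
rewrite (eq_bigr (fun k => if k == i then \sum_(x : Row m) Vlaw i x * f x else 1)).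
  by rewrite prod_if_eq => <-; apply: eq_bigr => w _; rewrite prod_if_eq.
move=> k _; case: eqP => [-> // | _].
by under eq_bigr do rewrite mulr1; exact: sum_Vlaw.
Qed.

Lemma expect_Xrow (i : 'I_n) (f : Row m -> R) :
  expect R (fun w : Omega m => f (Xof w i)) = \sum_(x : Row m) unif_row R i.+1 x * f x.
Proof.
have := expect_prod_rows (fun k x _ => if k == i then f x else 1).
rewrite (eq_bigr (fun k => if k == i then \sum_(x : Row m) unif_row R i.+1 x * f x else 1)).
  by rewrite prod_if_eq => <-; apply: eq_bigr => w _; rewrite prod_if_eq.
move=> k _; rewrite (eq_bigr (fun x => unif_row R k.+1 x * (if k == i then f x else 1))).
  by case: eqP => [-> // | _]; under eq_bigr do rewrite mulr1; exact: sum_unif_row.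
move=> x _; rewrite unif_rowE; case: eqP => [x_ones | _]; last by rewrite !mul0r.
by rewrite Vkernel_cst.
Qed.

Lemma eq_expect (f g : Omega m -> R) : f =1 g -> expect R f = expect R g.
Proof. by move=> fg; apply: eq_bigr => w _; rewrite fg. Qed.

Lemma expectD (f g : Omega m -> R) :
  expect R (fun w => f w + g w) = expect R f + expect R g.
Proof. by rewrite /expect -big_split; apply: eq_bigr => w _; rewrite mulrDr. Qed.

Lemma expectZ (a : R) (f : Omega m -> R) : expect R (fun w => a * f w) = a * expect R f.
Proof. by rewrite /expect mulr_sumr; apply: eq_bigr => w _; rewrite mulrCA. Qed.

Lemma expect_sum (I : finType) (F : I -> Omega m -> R) :
  expect R (fun w => \sum_i F i w) = \sum_i expect R (F i).
Proof. by rewrite /expect exchange_big; apply: eq_bigr => w _; rewrite mulr_sumr. Qed.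

Lemma expect_cst (a : R) : expect R (fun _ : Omega m => a) = a.
Proof. by have := expect_Xrow ord0 (fun=> a); rewrite -big_distrl /= sum_unif_row // mul1r. Qed.

Lemma probE (E : pred (Omega m)) : prob R E = expect R (fun w => (E w)%:R).
Proof.
rewrite /prob /expect big_mkcond /=; apply: eq_bigr => w _.
by case: (E w); rewrite ?mulr1 ?mulr0.
Qed.

Lemma forall_natr (I : finType) (P : I -> bool) :
  ([forall i, P i] : nat)%:R = \prod_i (P i : nat)%:R :> R.
Proof.
case: (boolP [forall i, P i]) => [/forallP allP | /forallPn [i notP]].
  by rewrite big1 // => i _; rewrite allP.
by rewrite (bigD1 i) //= (negbTE notP) mul0r.
Qed.

Lemma prob_Vrow_all (A : 'I_n -> {set Row m}) :
  prob R (fun w => [forall i, Vrow w i \in A i]) = \prod_(i < n) prob R (fun w => Vrow w i \in A i).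
Proof.
rewrite probE (eq_expect (g := fun w => \prod_i (Vrow w i \in A i : nat)%:R));
  last by move=> w; exact: forall_natr.
rewrite (expect_prod_Vrow (fun i x => (x \in A i : nat)%:R)).
by apply: eq_bigr => i _; rewrite probE (expect_Vrow i (fun x => (x \in A i : nat)%:R)).
Qed.

Lemma prob_Vrow_stage (i : 'I_n) (v : Row m) : (i == sm) || (i == sm1) ->
  prob R (fun w => Vrow w i == v) =
  2^-1 * prob R (fun w => Xof w sm == v) + 2^-1 * prob R (fun w => Xof w sm1 == v).
Proof.
move=> i_stage; rewrite !probE (expect_Vrow i (fun x => (x == v : nat)%:R)).
rewrite (expect_Xrow sm (fun x => (x == v : nat)%:R)) (expect_Xrow sm1 (fun x => (x == v : nat)%:R)).
by rewrite stage_mE stage_m1E sum_Vlaw_stage.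
Qed.

(** * Parities of the columns *)

Lemma lam1_stages : lam n 1 m + lam n 1 m.+1 = 0 :> R.
Proof.
have nE : n%:R = 2 * m%:R + 1 :> R by rewrite /nb -addn1 -mul2n natrD natrM.
have n_neq0 : 2 * m%:R + 1 != 0 :> R by rewrite -nE pnatr_eq0.
rewrite /lam !big_ord_recr !big_ord0 /= !ffactn0 !ffactn1 ?bin0 ?binn invr1 -[m.+1%:R]natr1 nE.
by field.
Qed.

Definition lamV (b : nat) (i : 'I_n) : R :=
  if (i == sm) || (i == sm1) then 2^-1 * (lam n b m + lam n b m.+1) else lam n b i.+1.

Lemma Vlaw_lam b (F : Row m -> R) :
    (forall k, (k <= n)%N -> \sum_(x : Row m) unif_row R k x * F x = lam n b k) ->
  forall i, \sum_(x : Row m) Vlaw i x * F x = lamV b i.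
Proof.
move=> unif_lam i; rewrite /lamV; case: ifP => [i_stage | i_other].
  by rewrite sum_Vlaw_stage // !unif_lam ?mulrDr // /nb; lia.
by under eq_bigr do rewrite /Vlaw i_other; rewrite unif_lam.
Qed.

Lemma lambarE : lambar R m = \prod_(i < n) lamV 2 i.
Proof.
rewrite /lambar prod_stages /lamV !eqxx orbT /= expr2 [RHS]mulrA [RHS]mulrC; congr (_ * _).
have stage_i (i : 'I_n) : ((i == sm) || (i == sm1)) = (i.+1 == m) || (i.+1 == m.+1).
  by rewrite !eq_stage // /nb; lia.
rewrite big_add1 /= big_mkord; apply: eq_big => [i | i].
  by rewrite -negb_or -stage_i negb_or.
by rewrite stage_i -negb_or => /negbTE->.
Qed.

Definition Vsign (w : Omega m) (j : 'I_n) : R := \prod_(i < n) (-1) ^+ Vrow w i j.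

Lemma VjE (w : Omega m) j : Vj w j = odd (\sum_(i < n) Vrow w i j).
Proof. by rewrite /Vj modn2. Qed.

Lemma Vj_sign (w : Omega m) j : (Vj w j)%:R = 2^-1 - 2^-1 * Vsign w j.
Proof. by rewrite /Vsign prodrXr -signr_odd VjE sign_bit; field. Qed.

Lemma eqVj1 (w : Omega m) j : ((Vj w j == 1%N) : nat) = Vj w j.
Proof. by rewrite VjE; case: odd. Qed.

Lemma expect_Vsign (j : 'I_n) : expect R (fun w => Vsign w j) = 0.
Proof.
rewrite (expect_prod_Vrow (fun i x => (-1) ^+ x j)).
rewrite (eq_bigr _ (fun i _ => Vlaw_lam (fun k k_le => unif_row_sign j k_le) i)).
by rewrite (bigD1 sm) //= /lamV eqxx lam1_stages mulr0 mul0r.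
Qed.

Lemma expect_Vsign_pair (j j' : 'I_n) :
  expect R (fun w => Vsign w j * Vsign w j') = if j == j' then 1 else lambar R m.
Proof.
rewrite (eq_expect (g := fun w => \prod_(i < n) ((-1) ^+ Vrow w i j * (-1) ^+ Vrow w i j')));
  last by move=> w; rewrite /Vsign big_split.
rewrite (expect_prod_Vrow (fun i x => (-1) ^+ x j * (-1) ^+ x j')).
case: eqVneq => [<- | jj'].
  by apply: big1 => i _; under eq_bigr do rewrite -expr2 sqrr_sign mulr1; exact: sum_Vlaw.
by rewrite lambarE; apply: eq_bigr => i _; apply: Vlaw_lam => k k_le; exact: unif_row_sign_pair.
Qed.

Lemma expect_Vj (j : 'I_n) : expect R (fun w => (Vj w j)%:R) = 2^-1.
Proof.
rewrite (eq_expect (g := fun w => 2^-1 + (- 2^-1) * Vsign w j));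
  last by move=> w; rewrite Vj_sign mulNr.
by rewrite expectD expect_cst expectZ expect_Vsign mulr0 addr0.
Qed.

Lemma expect_Vtot : expect R (fun w : Omega m => (Vtot w)%:R) = n%:R / 2.
Proof.
rewrite (eq_expect (g := fun w => \sum_j (Vj w j)%:R)); last by move=> w; rewrite /Vtot natr_sum.
rewrite expect_sum (eq_bigr _ (fun j _ => expect_Vj j)).
by rewrite sumr_const card_ord -[2^-1 *+ _]mulr_natl.
Qed.

Lemma Vtot_centered (w : Omega m) : (Vtot w)%:R - n%:R / 2 = - 2^-1 * \sum_j Vsign w j.
Proof.
rewrite /Vtot natr_sum (eq_bigr _ (fun j _ => Vj_sign w j)) sumrB sumr_const card_ord.
by rewrite -mulr_natl -mulr_sumr; ring.
Qed.

Lemma expect_sq_sum_Vsign :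
  expect R (fun w : Omega m => (\sum_j Vsign w j) ^+ 2) = n%:R * (1 + n.-1%:R * lambar R m).
Proof.
rewrite (eq_expect (g := fun w => \sum_j \sum_j' Vsign w j * Vsign w j'));
  last by move=> w; rewrite expr2 big_distrlr.
rewrite expect_sum (eq_bigr (fun _ => 1 + n.-1%:R * lambar R m));
  first by rewrite sumr_const card_ord [RHS]mulr_natl.
move=> j _; rewrite expect_sum (bigD1 j) //= expect_Vsign_pair eqxx; congr (_ + _).
rewrite (eq_bigr (fun _ => lambar R m));
  last by move=> j' j'j; rewrite expect_Vsign_pair eq_sym (negbTE j'j).
by rewrite sumr_const cardC1 card_ord mulr_natl.
Qed.

End LightbulbV.

Theorem lemma3p4 (R : realFieldType) (m : nat) (hm : (0 < m)%N) :
  [/\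
   (forall A : 'I_(nb m) -> {set Row m},
      prob R (fun w => [forall i, Vrow w i \in A i]) =
      \prod_(i < nb m) prob R (fun w => Vrow w i \in A i)),
   (forall i, i \in [:: stage m m; stage m m.+1] -> forall v : Row m,
      prob R (fun w => Vrow w i == v) =
      2^-1 * prob R (fun w => Xof w (stage m m) == v) +
      2^-1 * prob R (fun w => Xof w (stage m m.+1) == v)),
   (forall j : 'I_(nb m), prob R (fun w => Vj w j == 1%N) = 2^-1),
   expect R (fun w : Omega m => (Vtot w)%:R) = (nb m)%:R / 2 &
   var R (fun w : Omega m => (Vtot w)%:R) =
     (nb m)%:R / 4 * (1 - lambar R m) + (nb m)%:R ^+ 2 / 4 * lambar R m].
Proof.
split.
- exact: prob_Vrow_all.
- by move=> i; rewrite !inE => i_stage v; exact: prob_Vrow_stage.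
- move=> j; rewrite probE -(expect_Vj R hm j).
  by apply: eq_expect => w; rewrite eqVj1.
- exact: expect_Vtot.
rewrite /var (expect_Vtot R hm).
rewrite (eq_expect (g := fun w => 4^-1 * (\sum_j Vsign R w j) ^+ 2)); last first.
  by move=> w /=; rewrite Vtot_centered; field.
rewrite expectZ expect_sq_sum_Vsign // -subn1 natrB //.
by field.
Qed.
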